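(* Let $N\ge 2$ and let $P=(P_{ij})_{i,j=1}^N$ be the transition matrix of an irreducible Markov chain on $\{1,\dots,N\}$. For each $k$ let $Q^{(k)}=(P_{ij})_{i,j\ne k}$ be obtained from $P$ by deleting its $k$-th row and column, and assume that for every $k$ there is $n_0(k)$ such that all entries of $(Q^{(k)})^n$ are positive for all $n>n_0(k)$. Let $\mu_k$ be the Perron–Frobenius eigenvalue of $Q^{(k)}$, $\lambda_k=-\ln\mu_k$ ($\lambda_k=\infty$ if $\mu_k=0$), and for a probability vector $p\in\Delta_N$ let $M^{(k)}_n(p)=\sum_{i\ne k}\bigl(p^{(k)}(Q^{(k)})^n\bigr)_i$ with $p^{(k)}=(p_i)_{i\ne k}$. Then: (1) If $\lambda_i>\lambda_j$, then for any $p,q\in\Delta_N$ with $q_j<1$ there is $n_0=n_0(p,q)\in\mathbb{N}$ such that $M^{(i)}_n(p)<M^{(j)}_n(q)$ for all $n\ge n_0$. (2) If $\sigma$ is a permutation of $\{1,\dots,N\}$ with $\lambda_{\sigma_N}<\dots<\lambda_{\sigma_1}<\infty$, then for any family $p(1),\dots,p(N)\in\Delta_N$ with $p_i(i)<1$ for all $i$ there is $n_0\in\mathbb{N}$ such that for all $n\ge n_0$, \[ M^{(\sigma_1)}_n(p(\sigma_1))<M^{(\sigma_2)}_n(p(\sigma_2))<\dots<M^{(\sigma_N)}_n(p(\sigma_N)). \] (3) If $i$ is a state with $\lambda_i>\lambda_k$ for all $k\ne i$, then for any $p\in\Delta_N$ and any $k\ne i$ with $p_k<1$ there is $n_0=n_0(p)$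 such that $M^{(i)}_n(p)<M^{(k)}_n(p)$ for all $n\ge n_0$.
   Context: $\Delta_N$ is the simplex of probability distributions on $\{1,\dots,N\}$ (row vectors). $M^{(k)}_n(p)$ is the survival probability up to time $n$ of the chain started from $p$ and killed upon entering state $k$. *)

From HB Require Import structures.
From mathcomp Require Import all_boot all_order all_algebra.
From mathcomp Require Import all_classical all_reals all_analysis.
From mathcomp Require Import complex.
From mathcomp Require Import fingroup perm.
Set Implicit Arguments. Unset Strict Implicit. Unset Printing Implicit Defensive.
Import Order.TTheory GRing.Theory Num.Theory.
Local Open Scope ring_scope.

Section Defs.
Variable R : realType.

Definition in_simplex (N : nat) (p : 'rV[R]_N) : Prop :=
  (forall i, 0 <= p 0 i) /\ \sum_i p 0 i = 1.

Definition stochastic (N : nat) (P : 'M[R]_N) : Prop :=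
  (forall i j, 0 <= P i j) /\ (forall i, \sum_j P i j = 1).

Definition irreducible (N : nat) (P : 'M[R]_N) : Prop :=
  forall i j, exists m : nat, 0 < (P ^+ m) i j.

Definition Qk (n : nat) (P : 'M[R]_n.+2) (k : 'I_n.+2) : 'M[R]_n.+1 :=
  row' k (col' k P).

Definition ceigen (m : nat) (A : 'M[R]_m) (z : R[i]) : Prop :=
  exists v : 'rV[R[i]]_m, v != 0 /\ v *m map_mx (fun x => (x%:C)%C) A = z *: v.

(* Perron-Frobenius eigenvalue = spectral radius of a nonnegative matrix:
   the largest modulus of a (complex) eigenvalue *)
Definition PF_eigenvalue (m : nat) (A : 'M[R]_m) (mu : R) : Prop :=
  (exists z, ceigen A z /\ Normc.normc z = mu) /\
  (forall z, ceigen A z -> Normc.normc z <= mu).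

Definition lam (mu : R) : \bar R :=
  if mu == 0 then +oo%E else (- ln mu)%:E.

Definition Msurv (n : nat) (P : 'M[R]_n.+2) (k : 'I_n.+2) (t : nat)
  (p : 'rV[R]_n.+2) : R :=
  \sum_j (col' k p *m (Qk P k) ^+ t) 0 j.
End Defs.

From HB Require Import structures.
From mathcomp Require Import all_boot all_order all_algebra.
From mathcomp Require Import all_classical all_reals all_analysis.
From mathcomp Require Import complex.
From mathcomp Require Import fingroup perm.
From mathcomp Require Import lra.
Import Order.TTheory GRing.Theory Num.Theory.
Import numFieldNormedType.Exports.
Set Implicit Arguments. Unset Strict Implicit. Unset Printing Implicit Defensive.
Local Open Scope ring_scope.

(* Deleting a state [k] leaves a nonnegative primitive matrix [Q], which by
   Wielandt's variational argument has a positive right eigenvector [w] for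
   an eigenvalue [r > 0]; pairing with [w] identifies [r] with the spectral
   radius [mu k].  Since [x Q^t w = r^t x w] and [w] is bounded above and
   below, the survival mass [x Q^t 1] of a nonnegative nonzero [x] lies
   between two positive multiples of [r^t].  A smaller spectral radius, i.e.
   a larger [lam], therefore eventually gives a strictly smaller survival
   probability; (2) and (3) follow from (1) by taking a maximum over finitely
   many thresholds. *)

Section RealFacts.
Variable R : realType.

Lemma ler_sum_term (I : finType) (F : I -> R) i0 :
  (forall i, 0 <= F i) -> F i0 <= \sum_i F i.
Proof. by move=> F_ge0; rewrite (bigD1 i0) //= lerDl sumr_ge0. Qed.

Lemma exists_pos_lbound (I : finType) (F : I -> R) :
  (forall i, 0 < F i) -> exists2 e, 0 < e & forall i, e <= F i.
Proof.
move=> F_gt0; have [[i0 _] | I0] := pselect (exists i : I, True); last first.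
  by exists 1 => // i; exfalso; apply: I0; exists i.
have S_gt0 : 0 < \sum_i (F i)^-1.
  apply: (@lt_le_trans _ _ (F i0)^-1); first by rewrite invr_gt0.
  by apply: ler_sum_term => i; rewrite invr_ge0 ltW.
exists (\sum_i (F i)^-1)^-1 => [|i]; first by rewrite invr_gt0.
rewrite -[F i]invrK lef_pV2 ?posrE ?invr_gt0 //.
by apply: ler_sum_term => j; rewrite invr_ge0 ltW.
Qed.

Lemma weighted_sum_bounds (I : finType) (y c : I -> R) lo hi :
  (forall j, 0 <= y j) -> (forall j, lo <= c j <= hi) ->
  lo * \sum_j y j <= \sum_j y j * c j <= hi * \sum_j y j.
Proof.
move=> y_ge0 c_bnd; rewrite !mulr_sumr.
apply/andP; split; apply: ler_sum => j _; have /andP[lo_c c_hi] := c_bnd j.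
- by rewrite mulrC ler_wpM2l.
- by rewrite [X in _ <= X]mulrC ler_wpM2l.
Qed.

Lemma eventually_expr_lt (rho eps : R) : 0 <= rho < 1 -> 0 < eps ->
  exists n0, forall t, (n0 <= t)%N -> rho ^+ t < eps.
Proof.
move=> /andP[rho_ge0 rho_lt1] eps_gt0.
have := @cvg_expr R rho; rewrite ger0_norm // => /(_ rho_lt1) cvg0.
have [N _ HN] := cvgr0_norm_lt _ cvg0 _ eps_gt0.
by exists N => t /HN; rewrite ger0_norm // exprn_ge0.
Qed.

End RealFacts.

Lemma eventually_forall_fin (I : finType) (P : I -> nat -> Prop) :
  (forall i, exists n0, forall t, (n0 <= t)%N -> P i t) ->
  exists n0, forall t, (n0 <= t)%N -> forall i, P i t.
Proof.
move=> /choice[f f_spec]; exists (\max_i f i)%N => t le_t i.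
by apply: f_spec; apply: leq_trans le_t; apply: leq_bigmax.
Qed.

Section NonnegMatrix.
Variable R : realType.

Lemma row_neq0_gt0 n (x : 'rV[R]_n) :
  (forall j, 0 <= x 0 j) -> x != 0 -> exists j, 0 < x 0 j.
Proof.
move=> x_ge0 x_neq0; apply/not_existsP => x_ngt0; move/eqP: x_neq0; apply.
apply/rowP => j; rewrite mxE; apply/eqP; rewrite eq_le x_ge0 andbT leNgt.
exact/negP/x_ngt0.
Qed.

Lemma mulmx_row_gt0 m n (x : 'rV[R]_m) (M : 'M[R]_(m, n)) :
  (forall j, 0 <= x 0 j) -> x != 0 -> (forall a b, 0 < M a b) ->
  forall i, 0 < (x *m M) 0 i.
Proof.
move=> x_ge0 x_neq0 M_gt0 i; have [j xj_gt0] := row_neq0_gt0 x_ge0 x_neq0.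
rewrite mxE (bigD1 j) //= ltr_wpDr ?mulr_gt0 //.
by apply: sumr_ge0 => k _; rewrite mulr_ge0 // ltW.
Qed.

Lemma mulmx_row_ge0 m n (x : 'rV[R]_m) (M : 'M[R]_(m, n)) :
  (forall j, 0 <= x 0 j) -> (forall a b, 0 <= M a b) ->
  forall i, 0 <= (x *m M) 0 i.
Proof.
by move=> x_ge0 M_ge0 i; rewrite mxE sumr_ge0 // => j _; rewrite mulr_ge0.
Qed.

Lemma simplex_neq0 n (x : 'rV[R]_n) : in_simplex x -> x != 0.
Proof.
move=> [_]; apply: contra_eqN => /eqP ->.
by rewrite big1 1?eq_sym ?oner_eq0 // => i _; rewrite mxE.
Qed.

Lemma simplex_normalize n (y : 'rV[R]_n) :
  (forall j, 0 <= y 0 j) -> y != 0 -> in_simplex ((\sum_j y 0 j)^-1 *: y).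
Proof.
move=> y_ge0 y_neq0; have [j yj_gt0] := row_neq0_gt0 y_ge0 y_neq0.
have S_gt0 : 0 < \sum_j y 0 j.
  exact: lt_le_trans yj_gt0 (ler_sum_term _ y_ge0).
split => [i|]; first by rewrite mxE mulr_ge0 // invr_ge0 ltW.
under eq_bigr do rewrite mxE.
by rewrite -mulr_sumr mulVf // gt_eqF.
Qed.

Lemma mx_exp_ge0 n (A : 'M[R]_n) t :
  (forall a b, 0 <= A a b) -> forall a b, 0 <= (A ^+ t) a b.
Proof.
move=> A_ge0; elim: t => [|t IH] a b; first by rewrite expr0 mxE ler0n.
by rewrite exprS -mulmxE mxE; apply: sumr_ge0 => c _; rewrite mulr_ge0.
Qed.

End NonnegMatrix.

Section MatrixPowers.
Variable F : comPzRingType.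

Lemma mulmx_exp_eigen n (A : 'M[F]_n) (x : 'rV[F]_n) r t :
  x *m A = r *: x -> x *m A ^+ t = r ^+ t *: x.
Proof.
move=> xA; elim: t => [|t IH]; first by rewrite expr0 mulmx1 scale1r.
by rewrite exprSr -mulmxE mulmxA IH -scalemxAl xA scalerA -exprSr.
Qed.

Lemma exp_mulmx_eigen m n (A : 'M[F]_n) (w : 'M[F]_(n, m)) r t :
  A *m w = r *: w -> A ^+ t *m w = r ^+ t *: w.
Proof.
move=> Aw; elim: t => [|t IH]; first by rewrite expr0 mul1mx scale1r.
by rewrite exprS -mulmxE -mulmxA IH -scalemxAr Aw scalerA -exprSr.
Qed.

Lemma trmx_exp n (A : 'M[F]_n) t : (A ^+ t)^T = A^T ^+ t.
Proof.
elim: t => [|t IH]; first by rewrite !expr0 trmx1.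
by rewrite exprS exprSr -!mulmxE trmx_mul IH.
Qed.

End MatrixPowers.

Section Topology.
Variable R : realType.
Local Open Scope classical_set_scope.

Lemma continuous_sum (T : topologicalType) (I : Type) (r : seq I)
    (F : I -> T -> R) :
  (forall i, continuous (F i)) -> continuous (fun x => \sum_(i <- r) F i x).
Proof.
move=> F_cont; elim: r => [|i r IH].
  have -> : (fun x => \sum_(i <- [::]) F i x) = cst 0.
    by apply/funext => x; rewrite big_nil.
  exact: cst_continuous.
have -> : (fun x => \sum_(j <- i :: r) F j x) =
          F i \+ fun x => \sum_(j <- r) F j x.
  by apply/funext => x; rewrite big_cons.
by move=> x; exact: continuousD (F_cont i x) (IH x).
Qed.

Lemma closed_fun_le (T : topologicalType) (f g : T -> R) :
  continuous f -> continuous g -> closed [set x | f x <= g x].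
Proof.
move=> f_cont g_cont.
rewrite (_ : [set x | _] = (fun x => g x - f x) @^-1` [set y | 0 <= y]).
  apply: preimage_closed; last exact: closed_ge.
  by move=> x _; exact: continuousB (g_cont x) (f_cont x).
by apply/seteqP; split => x /=; rewrite subr_ge0.
Qed.

Lemma simplex_compact n : compact [set x : 'rV[R]_n | in_simplex x].
Proof.
have -> : [set x : 'rV[R]_n | in_simplex x] =
    [set x : 'rV[R]_n | forall i, `[0, 1]%classic (x ord0 i)]
    `&` (fun x : 'rV[R]_n => \sum_i x 0 i) @^-1` [set 1].
  apply/seteqP; split => x /=.
  - move=> [x_ge0 x_sum]; split=> // i; rewrite in_itv /= x_ge0 -x_sum.
    exact: ler_sum_term.
  - by move=> [x01 x_sum]; split=> // i; have /andP[] := x01 i.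
apply: compact_closedI.
  exact: (@rV_compact R n (fun=> `[0, 1]%classic)
    (fun=> @segment_compact R 0 1)).
apply: preimage_closed; last exact: closed_eq.
by move=> x _; apply: continuous_sum => i; exact: coord_continuous.
Qed.

End Topology.

Section Perron.
Variables (R : realType) (n : nat) (A : 'M[R]_n.+1) (k : nat).
Hypothesis A_ge0 : forall a b, 0 <= A a b.
(* [k.+1] rather than [k]: with [k = 0] the 1x1 zero matrix would qualify. *)
Hypothesis A_primitive : forall a b, 0 < (A ^+ k.+1) a b.
Local Open Scope classical_set_scope.

Let subinvariant (s : R) (x : 'rV[R]_n.+1) :=
  forall i, s * x 0 i <= (x *m A) 0 i.

Let bound := \sum_i \sum_j A j i.

Lemma subinvariant_le_bound s x :
  in_simplex x -> subinvariant s x -> s <= bound.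
Proof.
move=> [x_ge0 x_sum] sx.
have -> : s = \sum_i s * x 0 i by rewrite -mulr_sumr x_sum mulr1.
apply: ler_sum => i _; apply: le_trans (sx i) _.
rewrite mxE; apply: ler_sum => j _; rewrite ler_piMl //.
by rewrite -x_sum ler_sum_term.
Qed.

Lemma subinvariantZ s c x :
  0 <= c -> subinvariant s x -> subinvariant s (c *: x).
Proof.
move=> c_ge0 sx i; have := sx i; rewrite -scalemxAl !mxE => sxi.
by rewrite mulrCA ler_wpM2l.
Qed.

(* The Perron root is the largest [s] over this compact set. *)
Let cw_set := (@in_simplex R n.+1 `*` `[0, bound]%classic) `&`
  [set xs | subinvariant xs.2 xs.1].

Let snd_continuous : continuous (@snd 'rV[R]_n.+1 R).
Proof. by move=> xs; exact: cvg_snd. Qed.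

Lemma subinvariant_closed :
  closed [set xs : 'rV[R]_n.+1 * R | subinvariant xs.2 xs.1].
Proof.
have entry_continuous j : continuous (fun xs : 'rV[R]_n.+1 * R => xs.1 0 j).
  move=> xs; apply: (@continuous_comp _ _ _ fst (fun M : 'rV[R]_n.+1 => M 0 j)).
    exact: cvg_fst.
  exact: coord_continuous.
rewrite (_ : [set xs | _] =
  \bigcap_(i : 'I_n.+1)
    [set xs : 'rV[R]_n.+1 * R | xs.2 * xs.1 0 i <= (xs.1 *m A) 0 i]).
  2: by apply/seteqP; split => [xs sxs i _ | xs sxs i]; [apply: sxs | apply: sxs].

apply: (@closed_bigI _ _ setT) => i _; apply: closed_fun_le.
  by move=> xs; apply: cvgM; [exact: snd_continuous | exact: entry_continuous].
have -> : (fun xs : 'rV[R]_n.+1 * R => (xs.1 *m A) 0 i) =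
    (fun xs => \sum_j xs.1 0 j * A j i) by apply/funext => xs; rewrite mxE.
apply: continuous_sum => j xs.
by apply: cvgM; [exact: entry_continuous | exact: cvg_cst].
Qed.

Lemma cw_set_compact : compact cw_set.
Proof.
apply: compact_closedI subinvariant_closed; apply: compact_setX.
  exact: simplex_compact.
exact: segment_compact.
Qed.

Lemma cw_set_nonempty : cw_set !=set0.
Proof.
pose one : 'rV[R]_n.+1 := const_mx 1.
have one_ge0 j : 0 <= one 0 j by rewrite mxE.
have one_neq0 : one != 0.
  by apply/eqP => /rowP/(_ ord0); rewrite !mxE; apply/eqP; rewrite oner_eq0.
have x_simplex := simplex_normalize one_ge0 one_neq0.
exists ((\sum_j one 0 j)^-1 *: one, 0); split; [split|] => //=.
- rewrite in_itv /= lexx /bound.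
  by apply: sumr_ge0 => i _; apply: sumr_ge0.
- move=> i; rewrite mul0r mxE; apply: sumr_ge0 => j _.
  by rewrite mulr_ge0 //; exact: x_simplex.1.
Qed.

Lemma cw_improve x r : in_simplex x -> 0 <= r -> subinvariant r x ->
  x *m A != r *: x -> exists2 ys, cw_set ys & r < ys.2.
Proof.
move=> x_simplex r_ge0 rx xA_neq.
(* The defect [x A - r x] is nonnegative and nonzero, so pushing it through
   [A ^+ k.+1 > 0] makes it strictly positive: [x A ^+ k.+1] beats [r]. *)
have defect z j : (z *m A - r *: z) 0 j = (z *m A) 0 j - r * z 0 j.
  by rewrite !mxE.
set d := x *m A - r *: x.
have d_ge0 j : 0 <= d 0 j by rewrite defect subr_ge0.
have d_neq0 : d != 0 by rewrite subr_eq0.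
set y := x *m A ^+ k.+1.
have y_gt0 := mulmx_row_gt0 x_simplex.1 (simplex_neq0 x_simplex) A_primitive.
have dAk_gt0 := mulmx_row_gt0 d_ge0 d_neq0 A_primitive.
have yAE : y *m A - r *: y = d *m A ^+ k.+1.
  by rewrite /y -mulmxA mulmxE -exprSr exprS -mulmxE mulmxA mulmxBl scalemxAl.
have [e e_gt0 e_le] :=
  exists_pos_lbound (fun i => divr_gt0 (dAk_gt0 i) (y_gt0 i)).
have y_subinv : subinvariant (r + e) y.
  move=> i; have := e_le i; rewrite ler_pdivlMr // -yAE defect => le_e.
  rewrite mulrDl; lra.
have y_ge0 j : 0 <= y 0 j by exact: ltW.
have y_neq0 : y != 0.
  by apply/eqP => y0; have := y_gt0 ord0; rewrite -/y y0 mxE ltxx.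
have c_ge0 : 0 <= (\sum_j y 0 j)^-1 by rewrite invr_ge0; apply: sumr_ge0.
exists ((\sum_j y 0 j)^-1 *: y, r + e); last by rewrite /= ltrDl.
have y'_simplex := simplex_normalize y_ge0 y_neq0.
have y'_subinv := subinvariantZ c_ge0 y_subinv.
split; [split|] => //=.
rewrite in_itv /= (subinvariant_le_bound y'_simplex y'_subinv) andbT.
by rewrite addr_ge0 // ltW.
Qed.

Lemma perron_left : exists2 r, 0 < r &
  exists2 x : 'rV[R]_n.+1, (forall i, 0 < x 0 i) & x *m A = r *: x.
Proof.
have snd_within : {within cw_set, continuous snd}.
  exact: continuous_subspaceT snd_continuous.
have [[x r] /set_mem [[x_simplex r_itv] rx] r_max] :=
  compact_EVT_max cw_set_nonempty cw_set_compact snd_within.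
have r_ge0 : 0 <= r by move: r_itv; rewrite /= in_itv => /andP[].
have xA : x *m A = r *: x.
  apply/eqP; apply: contraT => /(cw_improve x_simplex r_ge0 rx)[ys /mem_set].
  by move=> /r_max /= ys_le; rewrite ltNge ys_le.
have := mulmx_row_gt0 x_simplex.1 (simplex_neq0 x_simplex) A_primitive.
rewrite (mulmx_exp_eigen _ xA) => rx_gt0.
have r_gt0 : 0 < r.
  rewrite lt_def r_ge0 andbT; apply: contraTneq (rx_gt0 ord0) => ->.
  by rewrite expr0n scale0r mxE ltxx.
exists r => //; exists x => // i.
by have := rx_gt0 i; rewrite mxE pmulr_rgt0 // exprn_gt0.
Qed.

End Perron.

Lemma perron_right (R : realType) n (A : 'M[R]_n.+1) k :
  (forall a b, 0 <= A a b) -> (forall a b, 0 < (A ^+ k.+1) a b) ->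
  exists2 r, 0 < r &
  exists2 w : 'cV[R]_n.+1, (forall i, 0 < w i 0) & A *m w = r *: w.
Proof.
move=> A_ge0 A_primitive.
have [||r r_gt0 [x x_gt0 xA]] := @perron_left R n A^T k.
- by move=> a b; rewrite mxE.
- by move=> a b; rewrite -trmx_exp mxE.
exists r => //; exists x^T => [i|]; first by rewrite mxE.
by rewrite -[A]trmxK -trmx_mul xA linearZ.
Qed.

Section Growth.
Variables (R : realType) (n : nat) (A : 'M[R]_n) (r : R) (w : 'cV[R]_n).
Hypothesis A_ge0 : forall a b, 0 <= A a b.
Hypothesis w_gt0 : forall i, 0 < w i 0.
Hypothesis Aw : A *m w = r *: w.

Lemma weighted_mass_exp (x : 'rV[R]_n) t :
  \sum_j (x *m A ^+ t) 0 j * w j 0 = r ^+ t * \sum_j x 0 j * w j 0.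
Proof.
transitivity ((x *m A ^+ t *m w) 0 0); first by rewrite [RHS]mxE.
by rewrite -mulmxA (exp_mulmx_eigen _ Aw) -scalemxAr [LHS]mxE [X in _ * X]mxE.
Qed.

Let w_bounds : exists2 lo, 0 < lo & forall j, lo <= w j 0 <= \sum_i w i 0.
Proof.
have [lo lo_gt0 lo_le] := exists_pos_lbound w_gt0; exists lo => // j.
by rewrite lo_le (@ler_sum_term _ _ (fun i => w i 0)) // => i; exact: ltW.
Qed.

Lemma mass_exp_le (x : 'rV[R]_n) : (forall j, 0 <= x 0 j) ->
  exists2 C, 0 <= C & forall t, \sum_j (x *m A ^+ t) 0 j <= C * r ^+ t.
Proof.
move=> x_ge0; have [lo lo_gt0 w_bnd] := w_bounds.
have xAt_ge0 t := mulmx_row_ge0 x_ge0 (mx_exp_ge0 t A_ge0).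
exists ((\sum_j x 0 j * w j 0) / lo) => [|t].
  apply: divr_ge0 (ltW lo_gt0); apply: sumr_ge0 => j _.
  by rewrite mulr_ge0 // ltW.
have /andP[+ _] := weighted_sum_bounds (xAt_ge0 t) w_bnd.
by rewrite weighted_mass_exp mulrAC ler_pdivlMr // mulrC [_ * r ^+ t]mulrC.
Qed.

Lemma mass_exp_ge (y : 'rV[R]_n) : (forall j, 0 <= y 0 j) -> y != 0 ->
  exists2 D, 0 < D & forall t, D * r ^+ t <= \sum_j (y *m A ^+ t) 0 j.
Proof.
move=> y_ge0 y_neq0; have [lo lo_gt0 w_bnd] := w_bounds.
have yAt_ge0 t := mulmx_row_ge0 y_ge0 (mx_exp_ge0 t A_ge0).
have yw_gt0 : 0 < \sum_j y 0 j * w j 0.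
  have w_gt0' a b : 0 < w a b by rewrite ord1.
  by have := mulmx_row_gt0 y_ge0 y_neq0 w_gt0' ord0; rewrite mxE.
have [j _] := row_neq0_gt0 y_ge0 y_neq0.
have hi_gt0 : 0 < \sum_i w i 0.
  by have /andP[_] := w_bnd j; apply: lt_le_trans (w_gt0 j).
exists ((\sum_j y 0 j * w j 0) / \sum_i w i 0) => [|t].
  by rewrite divr_gt0.
have /andP[_] := weighted_sum_bounds (yAt_ge0 t) w_bnd.
by rewrite weighted_mass_exp mulrAC ler_pdivrMr // mulrC [X in _ <= X]mulrC.
Qed.

End Growth.

Lemma eventually_mass_exp_lt (R : realType) m n (A : 'M[R]_m) (B : 'M[R]_n)
    (ra rb : R) (wa : 'cV[R]_m) (wb : 'cV[R]_n) (x : 'rV[R]_m) (y : 'rV[R]_n) :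
  (forall a b, 0 <= A a b) -> (forall a b, 0 <= B a b) ->
  (forall i, 0 < wa i 0) -> (forall i, 0 < wb i 0) ->
  A *m wa = ra *: wa -> B *m wb = rb *: wb -> 0 <= ra < rb ->
  (forall j, 0 <= x 0 j) -> (forall j, 0 <= y 0 j) -> y != 0 ->
  exists n0, forall t, (n0 <= t)%N ->
    \sum_j (x *m A ^+ t) 0 j < \sum_j (y *m B ^+ t) 0 j.
Proof.
move=> A_ge0 B_ge0 wa_gt0 wb_gt0 Awa Bwb /andP[ra_ge0 ra_lt] x_ge0 y_ge0 y_neq0.
have [C C_ge0 x_le] := mass_exp_le A_ge0 wa_gt0 Awa x_ge0.
have [D D_gt0 y_ge] := mass_exp_ge B_ge0 wb_gt0 Bwb y_ge0 y_neq0.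
have rb_gt0 : 0 < rb := le_lt_trans ra_ge0 ra_lt.
have rho01 : 0 <= ra / rb < 1.
  by rewrite ltr_pdivrMr // mul1r ra_lt andbT; exact: divr_ge0 (ltW rb_gt0).
have C1_gt0 : 0 < C + 1 := ltr_wpDl C_ge0 ltr01.
have [N rho_small] := eventually_expr_lt rho01 (divr_gt0 D_gt0 C1_gt0).
exists N => t /rho_small; rewrite ltr_pdivlMr // => rho_t.
apply: le_lt_trans (x_le t) (lt_le_trans _ (y_ge t)).
rewrite -[ra](divfK (lt0r_neq0 rb_gt0)) exprMn mulrA ltr_pM2r ?exprn_gt0 //.
apply: le_lt_trans rho_t; rewrite mulrC ler_wpM2l ?lerDl //.
by apply: exprn_ge0; case/andP: rho01.
Qed.

Lemma left_eigen_of_right (F : fieldType) n (A : 'M[F]_n) (r : F)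
    (w : 'cV[F]_n) :
  w != 0 -> A *m w = r *: w -> exists2 u : 'rV[F]_n, u != 0 & u *m A = r *: u.
Proof.
move=> w_neq0 Aw; have : \det (A - r%:M)^T == 0.
  apply/det0P; exists w^T; first by rewrite trmx_eq0.
  by rewrite -trmx_mul mulmxBl mul_scalar_mx Aw subrr trmx0.
rewrite det_tr => /det0P[u u_neq0 uB]; exists u => //.
by apply/eqP; rewrite -subr_eq0 -mul_mx_scalar -mulmxBr uB.
Qed.

Section Spectral.
Variable R : realType.
Local Notation normc := (@Normc.normc R).

Lemma normc_ge0 (z : R[i]) : 0 <= normc z.
Proof. by case: z => a b; rewrite /= sqrtr_ge0. Qed.

Lemma normc_real (a : R) : normc (a%:C)%C = `|a|.
Proof. by rewrite /= expr0n /= addr0 sqrtr_sqr. Qed.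

Lemma normc_sum (I : finType) (F : I -> R[i]) :
  normc (\sum_i F i) <= \sum_i normc (F i).
Proof.
elim/big_rec2: _ => [|i x y _ le_xy]; first by rewrite Normc.normc0.
exact: le_trans (le_normcD _ _) (lerD _ le_xy).
Qed.

Lemma ceigen_real n (A : 'M[R]_n) (r : R) (u : 'rV[R]_n) :
  u != 0 -> u *m A = r *: u -> ceigen A (r%:C)%C.
Proof.
move=> u_neq0 uA; exists (map_mx (fun x => (x%:C)%C) u).
by rewrite map_mx_eq0 -map_mxM uA map_mxZ.
Qed.

Variables (n : nat) (A : 'M[R]_n.+1) (r : R) (w : 'cV[R]_n.+1).
Hypothesis A_ge0 : forall a b, 0 <= A a b.
Hypothesis w_gt0 : forall i, 0 < w i 0.
Hypothesis Aw : A *m w = r *: w.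

Lemma ceigen_normc_le z : ceigen A z -> normc z <= r.
Proof.
move=> [v [v_neq0 vA]]; set a := \row_j normc (v 0 j).
have a_ge0 j : 0 <= a 0 j by rewrite mxE normc_ge0.
have a_neq0 : a != 0.
  apply: contraNneq v_neq0 => /rowP a0; apply/eqP/rowP => j.
  by rewrite mxE; apply: Normc.eq0_normc; have := a0 j; rewrite !mxE.
have aA j : normc z * a 0 j <= (a *m A) 0 j.
  have /rowP/(_ j) := vA; rewrite !mxE => vAj.
  rewrite -Normc.normcM -vAj; apply: le_trans (normc_sum _) _.
  by apply: ler_sum => i _; rewrite Normc.normcM !mxE normc_real ger0_norm.
have w_gt0' i j : 0 < w i j by rewrite ord1.
have aw_gt0 := mulmx_row_gt0 a_ge0 a_neq0 w_gt0' 0.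
rewrite -(ler_pM2r aw_gt0).
have -> : r * (a *m w) 0 0 = (a *m A *m w) 0 0.
  by rewrite -mulmxA Aw -scalemxAr [RHS]mxE.
rewrite [X in _ <= X]mxE mxE mulr_sumr; apply: ler_sum => j _.
by rewrite mulrA ler_wpM2r // ltW.
Qed.

Lemma PF_eigenvalue_eq mu : PF_eigenvalue A mu -> mu = r.
Proof.
move=> [[z [Az <-]] normc_le]; apply/eqP; rewrite eq_le ceigen_normc_le //=.
have w_neq0 : w != 0 by apply: contraTneq (w_gt0 ord0) => ->; rewrite mxE ltxx.
have [u u_neq0 uA] := left_eigen_of_right w_neq0 Aw.
have := normc_le _ (ceigen_real u_neq0 uA); rewrite normc_real.
exact: le_trans (ler_norm r).
Qed.

End Spectral.

Lemma lte_lam (R : realType) (a b : R) :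
  0 < a -> 0 < b -> (lam b < lam a)%E = (a < b).
Proof.
by move=> a_gt0 b_gt0; rewrite /lam !gt_eqF // lte_fin ltrN2 ltr_ln ?posrE.
Qed.

Lemma col'_simplex_neq0 (R : realType) n (j : 'I_n.+1) (q : 'rV[R]_n.+1) :
  in_simplex q -> q 0 j < 1 -> col' j q != 0.
Proof.
move=> [_ q_sum] qj_lt1; apply: contraTneq qj_lt1 => /rowP q'0.
rewrite -q_sum (bigD1_ord j) //= big1 ?addr0 ?ltxx // => i _.
by have := q'0 i; rewrite !mxE.
Qed.

Lemma Qk_ge0 (R : realType) n (P : 'M[R]_n.+2) :
  (forall a b, 0 <= P a b) -> forall k a b, 0 <= Qk P k a b.
Proof. by move=> P_ge0 k a b; rewrite !mxE. Qed.

Section Survival.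
Variables (R : realType) (n : nat) (P : 'M[R]_n.+2) (mu : 'I_n.+2 -> R).
Hypothesis P_ge0 : forall a b, 0 <= P a b.
Hypothesis mu_gt0 : forall k, 0 < mu k.
Hypothesis mu_perron : forall k, exists2 w : 'cV[R]_n.+1,
  (forall i, 0 < w i 0) & Qk P k *m w = mu k *: w.

Lemma Msurv_eventually_lt i j p q : mu i < mu j ->
  in_simplex p -> in_simplex q -> q 0 j < 1 ->
  exists n0, forall t, (n0 <= t)%N -> Msurv P i t p < Msurv P j t q.
Proof.
move=> mu_lt p_simplex q_simplex qj_lt1.
have [wi wi_gt0 Qwi] := mu_perron i; have [wj wj_gt0 Qwj] := mu_perron j.
apply: (eventually_mass_exp_lt (Qk_ge0 P_ge0 i) (Qk_ge0 P_ge0 j)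
  wi_gt0 wj_gt0 Qwi Qwj).
- by rewrite mu_lt andbT ltW.
- by move=> l; rewrite mxE; exact: p_simplex.1.
- by move=> l; rewrite mxE; exact: q_simplex.1.
- exact: col'_simplex_neq0.
Qed.

End Survival.

Theorem corollary1 (R : realType) (n : nat) (P : 'M[R]_n.+2)
  (mu : 'I_n.+2 -> R) :
  stochastic P -> irreducible P ->
  (forall k, exists n0 : nat, forall t : nat, (n0 < t)%N ->
      forall a b, 0 < (Qk P k ^+ t) a b) ->
  (forall k, PF_eigenvalue (Qk P k) (mu k)) ->
  (* (1) *)
  (forall i j : 'I_n.+2, (lam (mu j) < lam (mu i))%E ->
     forall p q : 'rV[R]_n.+2, in_simplex p -> in_simplex q -> q 0 j < 1 ->
     exists n0 : nat, forall t : nat, (n0 <= t)%N ->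
       Msurv P i t p < Msurv P j t q)
  /\
  (* (2) *)
  (forall sigma : 'S_n.+2,
     (forall a b : 'I_n.+2, (a < b)%N ->
        (lam (mu (sigma b)) < lam (mu (sigma a)))%E) ->
     (lam (mu (sigma ord0)) < +oo)%E ->
     forall pf : 'I_n.+2 -> 'rV[R]_n.+2,
       (forall i, in_simplex (pf i)) -> (forall i, pf i 0 i < 1) ->
       exists n0 : nat, forall t : nat, (n0 <= t)%N ->
         forall a b : 'I_n.+2, (a < b)%N ->
           Msurv P (sigma a) t (pf (sigma a)) < Msurv P (sigma b) t (pf (sigma b)))
  /\
  (* (3) *)
  (forall i : 'I_n.+2, (forall k, k != i -> (lam (mu k) < lam (mu i))%E) ->
     forall p : 'rV[R]_n.+2, in_simplex p ->
     forall k, k != i -> p 0 k < 1 ->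
       exists n0 : nat, forall t : nat, (n0 <= t)%N ->
         Msurv P i t p < Msurv P k t p).
Proof.
move=> [P_ge0 _] _ Q_primitive mu_PF.
have mu_perron k : 0 < mu k /\ exists2 w : 'cV[R]_n.+1,
    (forall i, 0 < w i 0) & Qk P k *m w = mu k *: w.
  have [t0 Qt0_gt0] := Q_primitive k.
  have [r r_gt0 [w w_gt0 Qw]] :=
    perron_right (Qk_ge0 P_ge0 k) (Qt0_gt0 t0.+1 (ltnSn t0)).
  rewrite (PF_eigenvalue_eq (Qk_ge0 P_ge0 k) w_gt0 Qw (mu_PF k)).
  by split => //; exists w.
have mu_gt0 k := (mu_perron k).1.
have Msurv_lt := Msurv_eventually_lt P_ge0 mu_gt0 (fun k => (mu_perron k).2).
have mu_lt i j : (lam (mu j) < lam (mu i))%E -> mu i < mu j by rewrite lte_lam.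
split; [|split].
- by move=> i j /mu_lt mu_ij p q; exact: Msurv_lt _ _ _ _ mu_ij.
- move=> sigma lam_sigma _ pf pf_simplex pf_lt1.
  pose ordered t (ab : 'I_n.+2 * 'I_n.+2) := (ab.1 < ab.2)%N ->
    Msurv P (sigma ab.1) t (pf (sigma ab.1)) <
    Msurv P (sigma ab.2) t (pf (sigma ab.2)).
  have [|N N_ordered] := @eventually_forall_fin _ (fun ab t => ordered t ab).
    move=> [a b]; have [ab|ba] := ltnP a b; last first.
      by exists 0%N => t _; rewrite /ordered /= ltnNge ba.
    have [N N_lt] := Msurv_lt _ _ (pf (sigma a)) _ (mu_lt _ _ (lam_sigma a b ab))
      (pf_simplex _) (pf_simplex _) (pf_lt1 _).
    by exists N => t /N_lt lt_t; rewrite /ordered.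
  by exists N => t /N_ordered ordered_t a b; exact: (ordered_t (a, b)).
- move=> i lam_i p p_simplex k k_neq_i pk_lt1.
  have mu_ki := mu_lt _ _ (lam_i k k_neq_i).
  exact: (Msurv_lt _ _ _ _ mu_ki p_simplex p_simplex pk_lt1).
Qed.
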